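(* Let $q$ be a prime power and $k,\delta,\alpha$ positive integers with $\alpha\ge3$ and $\delta\ge(\alpha-1)(k-1)$. Then, with $q,k,\delta,\alpha$ fixed and $n\to\infty$, $$B_q(n,k,\delta;\alpha)=O\!\left(q^{\left(1+\frac{1}{\lfloor\alpha/2\rfloor}\right)n}\right).$$
   Context: For a prime power $q$, $\mathcal{G}_q(n,k)$ denotes the set of all $k$-dimensional subspaces of $\mathbb{F}_q^n$. An $\alpha$-$(n,k,\delta)_q^c$ covering Grassmannian code is a subset $\mathcal{C}\subseteq\mathcal{G}_q(n,k)$ (no repeated codewords) such that every set of $\alpha$ distinct codewords of $\mathcal{C}$ spans a subspace of $\mathbb{F}_q^n$ of dimension at least $k+\delta$. $B_q(n,k,\delta;\alpha)$ denotes the maximum size of an $\alpha$-$(n,k,\delta)_q^c$ code. The implied constant in $O(\cdot)$ may depend on $q,k,\delta,\alpha$ but not on $n$. *)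

From mathcomp Require Import all_boot all_order all_algebra all_field.
From Stdlib Require Import Reals.
Set Implicit Arguments. Unset Strict Implicit. Unset Printing Implicit Defensive.
Import GRing.Theory.

(* Subspaces of F^n are {vspace 'rV[F]_n}; q = #|F| for a finite field F. *)

Definition covering_grassmannian_code (F : finFieldType) (n k delta alpha : nat)
  (C : seq {vspace 'rV[F]_n}) : Prop :=
  uniq C /\
  (forall U, U \in C -> \dim U = k) /\
  (forall S : seq {vspace 'rV[F]_n},
      uniq S -> size S = alpha -> {subset S <= C} ->
      (k + delta <= \dim (\sum_(U <- S) U)%VS)%N).

(* Fix a nonzero vector [vpick U] in each codeword [U]: this splits the code
   into at most [q^n] classes, and it suffices to bound each class.  In the
   class of [x] (for [k >= 2]) pick in every codeword a vector off the line
   [<[x]>].  Any [alpha] codewords of the class, all containing [<[x]>], span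
   at most [1 + d + alpha (k - 2)] dimensions, where [d] is the rank of the
   chosen vectors; the covering condition asks for [1 + alpha (k - 1)], so
   the chosen vectors are free.  Hence sums over the [floor(alpha/2)]-subsets
   of a class are pairwise distinct, [binom(|class|, floor(alpha/2)) <= q^n],
   and every class has size [O(q^(n / floor(alpha/2)))]. *)
From mathcomp Require Import all_boot all_order all_algebra all_field.
From Stdlib Require Import Reals.
From mathcomp Require Import zify.
From Stdlib Require Import Lra.
(* [Reals] shadows the [ssrnat] notations [_ ^ _] and [%N] on [nat]. *)
Import ssrnat.
Set Implicit Arguments. Unset Strict Implicit. Unset Printing Implicit Defensive.
Import GRing.Theory.

Section LinearAlgebra.
Variables (K : fieldType) (vT : vectType K).
Implicit Types (x y : vT) (T : {vspace vT}).
Local Open Scope ring_scope.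

Lemma dim_add_line_ge2 x y :
  x != 0 -> y \notin <[x]>%VS -> (1 < \dim (<[x]> + <[y]>)%VS)%N.
Proof.
move=> x0 yNx; have: free [:: y; x] by rewrite free_cons span_seq1 yNx seq1_free.
by rewrite /free span_cons span_seq1 addvC => /eqP ->.
Qed.

Lemma dimv_add_sum_through_line_le (I : eqType) (Us : I -> {vspace vT})
    (g : I -> vT) x T (s : seq I) k :
  x != 0 -> x \in T ->
  {in s, forall i, [/\ x \in Us i, g i \in Us i, g i \in T,
                       g i \notin <[x]>%VS & \dim (Us i) = k]} ->
  (\dim (T + \sum_(i <- s) Us i)%VS <= \dim T + size s * (k - 2))%N.
Proof.
move=> x0 xT; elim: s => [|i s IHs] Hs; first by rewrite big_nil addv0 addn0.
have [xU gU gT gNx dimU] := Hs i (mem_head _ _).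
have {IHs} := IHs (sub_in1 (fun j => @mem_behead _ (i :: s) j) Hs).
set W := (T + \sum_(j <- s) Us j)%VS => dimW.
have TW : (T <= W)%VS by apply: addvSl.
have cap_ge2 : (1 < \dim (W :&: Us i))%N.
  apply: leq_trans (dim_add_line_ge2 x0 gNx) (dimvS _).
  by rewrite subv_cap !subv_add -!memvE xU gU !(subvP TW).
have cap_le : (\dim (W :&: Us i) <= k)%N by rewrite -dimU dimvS ?capvSr.
have := dimv_sum_cap W (Us i).
rewrite big_cons addvA (addvC T) -addvA addvC -/W dimU /= mulSn; lia.
Qed.

Lemma free_transversal_of_dim_sum (I : eqType) (Us : I -> {vspace vT})
    (g : I -> vT) x (s : seq I) k :
  x != 0 -> (1 < k)%N ->
  {in s, forall i, [/\ x \in Us i, g i \in Us i,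
                       g i \notin <[x]>%VS & \dim (Us i) = k]} ->
  (k + (size s).-1 * (k - 1) <= \dim (\sum_(i <- s) Us i)%VS)%N ->
  free [seq g i | i <- s].
Proof.
move=> x0 k_gt1 Hs dim_sum.
set T := (<[x]> + <<[seq g i | i <- s]>>)%VS.
have xT : x \in T by rewrite memvE addvSl.
have sum_le : (\dim (\sum_(i <- s) Us i)%VS <= \dim T + size s * (k - 2))%N.
  apply: leq_trans (dimvS (addvSr T _)) _.
  apply: (dimv_add_sum_through_line_le (g := g) x0 xT) => i si.
  have [xU gU gNx dimU] := Hs i si; split=> //.
  by apply: (subvP (addvSr _ _)); rewrite memv_span ?map_f.
have dimT : (\dim T <= 1 + \dim <<[seq g i | i <- s]>>)%N.
  by have := (dimv_add_leqif <[x]> <<[seq g i | i <- s]>>).1; rewrite dim_vline x0.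
have := dim_span [seq g i | i <- s]; rewrite /free size_map eqn_leq => ->.
move: sum_le dimT dim_sum; case: (size s) => [|a] /=; first lia.
nia.
Qed.

Definition subset_sum (I : finType) (g : I -> vT) (S : {set I}) : vT :=
  \sum_(i in S) g i.

Lemma free_subset_sum_inj (I : finType) (g : I -> vT) (T : {set I}) :
  free [seq g i | i <- enum T] ->
  {in [pred S : {set I} | S \subset T] &, injective (subset_sum g)}.
Proof.
rewrite /subset_sum => freeT.
suff sub_sum (S1 S2 : {set I}) : S1 \subset T -> S2 \subset T ->
    \sum_(i in S1) g i = \sum_(i in S2) g i -> S1 \subset S2.
  move=> S1 S2; rewrite !inE => ST1 ST2 eqS.
  by apply/eqP; rewrite eqEsubset (sub_sum S1 S2) ?(sub_sum S2 S1).
move=> ST1 ST2 eqS; apply/subsetP => i iS1.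
have iT : i \in T := subsetP ST1 i iS1.
pose X := [seq g l | l <- rem i (enum T)].
have giNX : g i \notin <<X>>%VS.
  have iTs : i \in enum T by rewrite mem_enum.
  move: freeT; rewrite (perm_free (perm_map g (perm_to_rem iTs))).
  by rewrite /= free_cons => /andP[].
have inX j : j \in T -> j != i -> g j \in <<X>>%VS.
  move=> jT ji; apply: memv_span; apply: map_f.
  by rewrite mem_rem_uniq ?enum_uniq // inE ji mem_enum.
apply: contraR giNX => iNS2.
have -> : g i = \sum_(j in S2) g j - \sum_(j in S1 | j != i) g j.
  by rewrite -eqS (bigD1 i iS1) /= addrK.
apply: rpredB; apply: rpred_sum => j.
  move=> jS2; apply: inX; first exact: subsetP ST2 j jS2.
  by apply: contraNneq iNS2 => <-.
by case/andP => jS1 ji; apply: inX ji; apply: subsetP ST1 j jS1.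
Qed.

End LinearAlgebra.

Lemma exists_set_between (I : finType) (A B : {set I}) (a : nat) :
  A \subset B -> #|A| <= a <= #|B| ->
  exists T : {set I}, [/\ A \subset T, T \subset B & #|T| = a].
Proof.
move=> AB /andP[]; move Hd: (a - #|A|) => d.
elim: d A AB Hd => [|d IHd] A AB Hd A_le a_le.
  by exists A; split=> //; lia.
have [j jB jNA] : exists2 j, j \in B & j \notin A.
  apply/subsetPn; apply: contraTN a_le => /subset_leq_card; lia.
have jAB : j |: A \subset B by rewrite subUset sub1set jB AB.
have cardjA : #|j |: A| = #|A|.+1 by rewrite cardsU1 jNA.
have [T [jAT TB cardT]] := IHd (j |: A) jAB ltac:(lia) ltac:(lia) a_le.
by exists T; split=> //; apply: subset_trans jAT; apply: subsetUr.
Qed.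

Lemma bin_card_le_of_free (F : finFieldType) (n : nat) (I : finType)
    (K : {set I}) (g : I -> 'rV[F]_n) (alpha m : nat) :
  m.*2 <= alpha <= #|K| ->
  (forall T : {set I}, T \subset K -> #|T| = alpha ->
     free [seq g i | i <- enum T]) ->
  'C(#|K|, m) <= #|F| ^ n.
Proof.
move=> /andP[m2_le alpha_le] freeK.
set draws := [set S : {set I} | S \subset K & #|S| == m].
have sum_inj : {in draws &, injective (subset_sum g)}.
  move=> S1 S2; rewrite !inE => /andP[S1K /eqP cardS1] /andP[S2K /eqP cardS2].
  have S12K : S1 :|: S2 \subset K by rewrite subUset S1K S2K.
  have card12 : #|S1 :|: S2| <= alpha <= #|K|.
    by rewrite alpha_le andbT; have := (leq_card_setU S1 S2).1; rewrite -addnn in m2_le; lia.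
  have [T [S12T TK cardT]] := exists_set_between S12K card12.
  apply: (free_subset_sum_inj (freeK T TK cardT)); rewrite inE.
    exact: subset_trans (subsetUl S1 S2) S12T.
  exact: subset_trans (subsetUr S1 S2) S12T.
rewrite -cards_draws -(card_in_imset sum_inj).
by apply: leq_trans (max_card _) _; rewrite card_mx mul1n.
Qed.

Lemma expn_subn_leq_ffact (K m : nat) : (K - m) ^ m <= K ^_ m.
Proof.
elim: m K => [|m IHm] K; first by rewrite ffactn0.
rewrite ffactnS expnS (_ : K - m.+1 = K.-1 - m); last by lia.
by rewrite leq_mul ?IHm // (leq_trans (leq_subr _ _) (leq_pred _)).
Qed.

Lemma fact_leq_expn (m : nat) : m`! <= m ^ m.
Proof.
elim: m => [|m IHm] //; rewrite factS expnS leq_mul //.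
by apply: leq_trans IHm _; case: m => [|m] //; rewrite leq_exp2r.
Qed.

Lemma leq_of_bin_leq_expn (K m t : nat) :
  0 < m -> 'C(K, m) <= t ^ m -> K <= m + m * t.
Proof.
move=> m_gt0 binK.
have : (K - m) ^ m <= (m * t) ^ m.
  apply: leq_trans (expn_subn_leq_ffact K m) _.
  by rewrite -bin_ffact expnMn mulnC leq_mul ?fact_leq_expn.
by rewrite leq_exp2r //; lia.
Qed.

Section CoveringCode.
Variables (F : finFieldType) (n k delta alpha : nat).
Variable C : seq {vspace 'rV[F]_n}.
Hypotheses (k_gt0 : 0 < k) (alpha_ge3 : 3 <= alpha).
Hypothesis delta_ge : (alpha - 1) * (k - 1) <= delta.
Hypothesis codeC : @covering_grassmannian_code F n k delta alpha C.
Local Open Scope ring_scope.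

Definition vpick_class (x : 'rV[F]_n) : {set seq_sub C} :=
  [set U : seq_sub C | vpick (val U) == x].

Definition off_line (x : 'rV[F]_n) (U : {vspace 'rV[F]_n}) : 'rV[F]_n :=
  odflt 0 [pick w | (w \in U) && (w \notin <[x]>%VS)].

Lemma dim_codeword (U : seq_sub C) : \dim (val U) = k.
Proof. by case: codeC => _ [dimC _]; apply: dimC; apply: valP. Qed.

Lemma vpick_codeword_neq0 (U : seq_sub C) : vpick (val U) != 0.
Proof. by rewrite vpick0 -dimv_eq0 dim_codeword -lt0n. Qed.

Lemma codeword_vpick_line (U : seq_sub C) :
  k = 1%N -> val U = <[vpick (val U)]>%VS.
Proof.
move=> k1; apply/esym/eqP; rewrite eqEdim -memvE memv_pick dim_vline.
by rewrite vpick_codeword_neq0 dim_codeword k1.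
Qed.

Lemma card_vpick_class_le1 x : k = 1%N -> (#|vpick_class x| <= 1)%N.
Proof.
move=> k1; apply/card_le1_eqP => U V; rewrite !inE => /eqP xU /eqP xV.
apply: val_inj; rewrite (codeword_vpick_line U k1) (codeword_vpick_line V k1).
by rewrite xU xV.
Qed.

Lemma off_lineP x (U : seq_sub C) : x != 0 -> (1 < k)%N ->
  off_line x (val U) \in val U /\ off_line x (val U) \notin <[x]>%VS.
Proof.
move=> x0 k_gt1; rewrite /off_line; case: pickP => [w /andP[] //|noW] /=.
have : ~~ (val U <= <[x]>)%VS.
  by apply: contraTN k_gt1 => /dimvS; rewrite dim_vline x0 dim_codeword -leqNgt.
by case/subvPn => w wU wNx; move: (noW w); rewrite wU wNx.
Qed.

Lemma free_vpick_class x (T : {set seq_sub C}) :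
  (1 < k)%N -> T \subset vpick_class x -> #|T| = alpha ->
  free [seq off_line x (val U) | U <- enum T].
Proof.
move=> k_gt1 Tx cardT.
have [U0 U0T|] := pickP (mem T); last first.
  by move/eq_card0; rewrite cardT => alpha0; move: alpha_ge3; rewrite alpha0.
have x0 : x != 0.
  by have := subsetP Tx U0 U0T; rewrite inE => /eqP <-; apply: vpick_codeword_neq0.
apply: (free_transversal_of_dim_sum (Us := val) x0 k_gt1) => [U UT|].
  have [offU offNx] := off_lineP U x0 k_gt1.
  rewrite mem_enum in UT.
  have /eqP xU : vpick (val U) == x by have := subsetP Tx U UT; rewrite inE.
  by split=> //; [rewrite -xU memv_pick | apply: dim_codeword].
rewrite -cardE cardT.
have -> : (\sum_(U <- enum T) val U = \sum_(V <- [seq val U | U <- enum T]) V)%VS.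
  by rewrite big_map.
rewrite -subn1; apply: leq_trans (leq_add (leqnn k) delta_ge) _.
case: codeC => _ [_ ]; apply.
- by rewrite map_inj_uniq ?enum_uniq //; apply: val_inj.
- by rewrite size_map -cardE.
- by move=> V /mapP[U _ ->]; apply: valP.
Qed.

Lemma card_vpick_class_le x t :
  (#|F| ^ n <= t ^ alpha./2 ->
   #|vpick_class x| <= alpha + alpha./2 + alpha./2 * t)%N.
Proof.
move=> qn_le; have [k_le1|k_gt1] := leqP k 1.
  by apply: leq_trans (card_vpick_class_le1 x _) _; lia.
have [|alpha_le] := ltnP #|vpick_class x| alpha; first lia.
have m_gt0 : (0 < alpha./2)%N by rewrite half_gt0; lia.
suff : (#|vpick_class x| <= alpha./2 + alpha./2 * t)%N by lia.
apply: (leq_of_bin_leq_expn m_gt0); apply: leq_trans qn_le.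
apply: (bin_card_le_of_free (g := fun U => off_line x (val U)) (alpha := alpha)).
  by rewrite -geq_half_double leqnn alpha_le.
by move=> T; apply: free_vpick_class.
Qed.

Lemma size_code_le t :
  (#|F| ^ n <= t ^ alpha./2 ->
   size C <= #|F| ^ n * (alpha + alpha./2 + alpha./2 * t))%N.
Proof.
move=> qn_le; case: codeC => uniqC _.
rewrite -(card_seq_sub uniqC) -sum1_card.
rewrite (partition_big (fun U : seq_sub C => vpick (val U)) xpredT) //=.
apply: (@leq_trans (\sum_(x : 'rV[F]_n) (alpha + alpha./2 + alpha./2 * t))%N).
  by apply: leq_sum => x _; rewrite sum1dep_card; apply: card_vpick_class_le.
by rewrite sum_nat_const card_mx mul1n.
Qed.

End CoveringCode.

Lemma INR_expn (a b : nat) : INR (a ^ b) = (INR a ^ b)%R.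
Proof. by elim: b => [|b IHb] //; rewrite expnS mult_INR IHb. Qed.

Lemma INR_expn_le_Rpower (q m n : nat) : (0 < q)%N -> (0 < m)%N ->
  (INR (q ^ (n + n %/ m)) <= Rpower (INR q) ((1 + / INR m) * INR n))%R.
Proof.
move=> q_gt0 m_gt0.
have q_ge1 : (1 <= INR q)%R by apply: (le_INR 1); apply/leP.
have m_pos : (0 < INR m)%R by apply: (lt_INR 0); apply/ltP.
rewrite INR_expn -Rpower_pow; last lra.
apply: Rle_Rpower => //.
rewrite Rmult_plus_distr_r Rmult_1_l plus_INR; apply: Rplus_le_compat_l.
apply: (Rmult_le_reg_r (INR m)) => //.
rewrite -mult_INR Rmult_comm -Rmult_assoc Rinv_r ?Rmult_1_l; last lra.
by apply/le_INR/leP; apply: leq_divM.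
Qed.

Theorem mainTheorem4 (F : finFieldType) (k delta alpha : nat) :
  (0 < k)%N -> (0 < delta)%N -> (3 <= alpha)%N ->
  ((alpha - 1) * (k - 1) <= delta)%N ->
  exists (c : R) (N : nat),
    forall (n : nat) (C : seq {vspace 'rV[F]_n}),
      (N <= n)%N ->
      @covering_grassmannian_code F n k delta alpha C ->
      (INR (size C) <= c * Rpower (INR #|F|)
                                  ((1 + / INR (alpha./2)) * INR n))%R.
Proof.
move=> k_gt0 _ alpha_ge3 delta_ge.
set m := alpha./2; have m_gt0 : (0 < m)%N by rewrite half_gt0; lia.
have q_gt1 : (1 < #|F|)%N := card_finNzRing_gt1 F.
exists (INR ((alpha + m.*2) * #|F|)), 0%N => n C _ codeC.
set t := (#|F| ^ (n %/ m).+1)%N.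
have qn_le : (#|F| ^ n <= t ^ m)%N.
  by rewrite -expnM; apply: leq_pexp2l; [apply: ltnW | apply: ltnW (ltn_ceil n m_gt0)].
have size_le : (size C <= (alpha + m.*2) * #|F| * #|F| ^ (n + n %/ m))%N.
  apply: leq_trans (size_code_le k_gt0 alpha_ge3 delta_ge codeC qn_le) _.
  have t_gt0 : (0 < t)%N by rewrite expn_gt0 ltnW.
  have : (alpha + m + m * t <= (alpha + m.*2) * t)%N.
    by rewrite -addnn addnA mulnDl leq_add2r leq_pmulr.
  have qn_gt0 : (0 < #|F| ^ n)%N by rewrite expn_gt0 ltnW.
  rewrite -/m -(leq_pmul2l qn_gt0) => /leq_trans; apply.
  by rewrite /t expnS expnD mulnCA -mulnA (mulnCA (#|F| ^ n)).
apply: Rle_trans (le_INR _ _ (elimT leP size_le)) _.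
rewrite mult_INR; apply: Rmult_le_compat_l; first exact: pos_INR.
exact: INR_expn_le_Rpower (ltnW q_gt1) m_gt0.
Qed.
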